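(* For every $\rho<\infty$, one can choose $\beta<\infty$ such that $\mathbb{P}(\mathbf{0}\text{ is }(\beta,t)\text{-good})>1-e^{-\rho t}$ for all large enough $t$.
   Context: Fix $\lambda>0$. Graphical construction: for each $x\in\mathbb{Z}$ independent rate-$\lambda$ Poisson processes $U^{x,x+1}$ and $U^{x,x-1}$ of times (infection arrows from $x$ to $x\pm1$) (and rate-$1$ recovery processes, irrelevant here). A $\lambda$-path starting at $(z,s)$ is a finite sequence of space-time points with nondecreasing times starting at $(z,s)$, whose consecutive segments are vertical (staying at a site) or jumps from a site $x'$ to a neighbour $x''$ at a time $u\in U^{x',x''}$. For $\beta,t>0$, $\beta t$ stands for $\lceil\beta t\rceil$, and $(z,s)$ is $(\beta,t)$-good if every $\lambda$-path starting at $(z,s)$ makes fewer than $\beta t$ jumps during $[s,s+t]$. $\mathbf{0}=(0,0)$. *)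

From HB Require Import structures.
From mathcomp Require Import all_boot all_order all_algebra.
From mathcomp Require Import all_classical all_reals all_analysis.
Set Implicit Arguments. Unset Strict Implicit. Unset Printing Implicit Defensive.
Import Order.TTheory GRing.Theory Num.Theory.
Local Open Scope classical_set_scope.
Local Open Scope ring_scope.

Section GraphicalConstruction.
Variable R : realType.

(* Infection arrows: [A x true] = U^{x,x+1}, [A x false] = U^{x,x-1}
   (sets of arrival times).  A space-time point is (site, time). *)
Definition arrows := int -> bool -> set R.

Fixpoint lam_path (A : arrows) (p : int * R) (s : seq (int * R)) : Prop :=
  match s with
  | [::] => True
  | q :: s' =>
      ((q.1 = p.1 /\ p.2 <= q.2)
       \/ (q.2 = p.2 /\
           ((q.1 = p.1 + 1 /\ A p.1 true p.2) \/ (q.1 = p.1 - 1 /\ A p.1 false p.2))))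
      /\ lam_path A q s'
  end.

Fixpoint jumps_in (a b : R) (p : int * R) (s : seq (int * R)) : nat :=
  match s with
  | [::] => 0%N
  | q :: s' => ((q.1 != p.1) && (a <= p.2 <= b)) + jumps_in a b q s'
  end.

Definition good (A : arrows) (beta t : R) (z : int) (s : R) : Prop :=
  forall path : seq (int * R), lam_path A (z, s) path ->
    ((jumps_in s (s + t) (z, s) path)%:Z < Num.ceil (beta * t))%R.

Definition count_eq (A : set R) (a b : R) (n : nat) : Prop :=
  exists s : seq R, uniq s /\ size s = n /\ forall u, (u \in s) <-> (A u /\ a < u <= b).

(* a cell ((x,dir),(a,b),n): "the process U^{x,x+-1} has n points in (a,b]" *)
Definition cell := ((int * bool) * (R * R) * nat)%type.

Definition cells_disjoint (c c' : cell) : bool :=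
  (c.1.1 != c'.1.1) || (c.1.2.2 <= c'.1.2.1) || (c'.1.2.2 <= c.1.2.1).

Definition poisson_pmf (mu : R) (n : nat) : R := expR (- mu) * mu ^+ n / (n`!)%:R.

Definition cells_event (T : Type) (U : T -> arrows) (cs : seq cell) : set T :=
  [set w | forall c, c \in cs -> count_eq (U w c.1.1.1 c.1.1.2) c.1.2.1 c.1.2.2 c.2].

End GraphicalConstruction.

(* U : Omega -> arrows is a family of independent rate-lam Poisson processes
   (indexed by the directed edges (x, x+-1)) under P: for every finite family
   of pairwise disjoint space-time cells (distinct edges or disjoint time
   intervals), the joint event that the counts equal prescribed values is
   measurable and has the product of Poisson(lam * length) probabilities. *)
Definition poisson_arrows (R : realType) (d : measure_display)
  (Omega : measurableType d) (P : probability Omega R) (lam : R)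
  (U : Omega -> arrows R) : Prop :=
  forall cs : seq (cell R),
    all (fun c => c.1.2.1 <= c.1.2.2) cs ->
    pairwise (@cells_disjoint R) cs ->
    measurable (cells_event U cs) /\
    P (cells_event U cs) =
      (\prod_(c <- cs) poisson_pmf (lam * (c.1.2.2 - c.1.2.1)) c.2)%:E.

From Pilot Require Import Defs.
From HB Require Import structures.
From mathcomp Require Import all_boot all_order all_algebra.
From mathcomp Require Import all_classical all_reals all_analysis.
From mathcomp Require Import ring lra zify.
Set Implicit Arguments. Unset Strict Implicit. Unset Printing Implicit Defensive.
Import Order.TTheory GRing.Theory Num.Theory.
Local Open Scope classical_set_scope.
Local Open Scope ring_scope.

(* Cut [0, t] into n windows of length h = t / n.  A lambda-path from 0 with
   k jumps in [0, t] stays in [-k, k].  If two consecutive jumps fall in the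
   same window, two adjacent edges carry arrows in that window, an event of
   probability O(k n (lam h)^2) = O(k (lam t)^2 / n).  Otherwise the jumps use
   k strictly increasing windows, each carrying an arrow on the edge used;
   with a = 2 e lam h this has probability at most
   (2 lam h / a)^k (1 + a)^(n+1) <= exp (2 e lam t (n + 1) / n - k).
   Taking beta = 4 e lam + |rho| + 2 and then n large, both are small
   compared with exp (- rho t). *)

Lemma geometric_sum_nat (R : comPzRingType) (a : R) j N :
  \sum_(j <= c < N) a * (1 + a) ^+ (N - c.+1) = (1 + a) ^+ (N - j) - 1.
Proof.
elim: N => [|N IH]; first by rewrite big_geq // sub0n expr0 subrr.
have [jN|Nj] := leqP j N; last by rewrite big_geq // (eqP Nj) expr0 subrr.
rewrite big_nat_recr //= subnn expr0 mulr1 subSn // exprS.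
rewrite (eq_big_nat _ _ (F2 := fun c => (1 + a) * (a * (1 + a) ^+ (N - c.+1)))).
  by rewrite -mulr_sumr IH; ring.
by move=> c /andP[_ cN]; rewrite subSS -(subnSK cN) exprS mulrCA.
Qed.

Section PoissonArrows.
Variables (R : realType) (d : measure_display) (Omega : measurableType d)
  (P : probability Omega R) (lam : R) (U : Omega -> arrows R).
Hypotheses (lam_gt0 : 0 < lam) (PU : poisson_arrows P lam U).

Lemma measure_bigsetU_le (I : Type) (s : seq I) (F : I -> set Omega) :
  (forall i, measurable (F i)) ->
  (P (\big[setU/set0]_(i <- s) F i) <= \sum_(i <- s) P (F i))%E.
Proof.
move=> mF; elim: s => [|i s IH]; first by rewrite !big_nil measure0.
rewrite !big_cons; apply: le_trans (measureU2 _ _ _) _ => //.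
  exact: bigsetU_measurable.
exact: leeD2l.
Qed.

Lemma measure_bigsetU_card_le (T : finType) (F : T -> set Omega) (r : R) :
  (forall i, measurable (F i)) -> (forall i, (P (F i) <= r%:E)%E) ->
  (P (\big[setU/set0]_(i : T) F i) <= (#|T|%:R * r)%:E)%E.
Proof.
move=> mF PF; apply: le_trans (measure_bigsetU_le _ mF) _.
apply: (@le_trans _ _ (\sum_(i : T) r%:E)%E); first exact: lee_sum.
by rewrite sumEFin sumr_const mulr_natl.
Qed.

Section Discretization.
Variable h : R.
Hypothesis h_gt0 : 0 < h.

Definition slot := ((int * bool) * nat)%type.

Definition slot_cell (s : slot) (n : nat) : cell R :=
  (s.1, (h * (s.2%:R - 1), h * s.2%:R), n).

Definition empty_slots (Z : seq slot) : set Omega :=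
  cells_event U [seq slot_cell s 0 | s <- Z].

Definition occupied (s : slot) : set Omega := ~` empty_slots [:: s].

Definition all_occupied (L : seq slot) : set Omega :=
  \big[setI/setT]_(s <- L) occupied s.

Let z := expR (- (lam * h)).
Let q := 1 - z.

Lemma q_ge0 : 0 <= q.
Proof. by rewrite subr_ge0 expR_le1 oppr_le0 mulr_ge0 ?ltW. Qed.

Lemma q_le : q <= lam * h.
Proof. by have := expR_ge1Dx (- (lam * h)); rewrite /q /z; lra. Qed.

Lemma slot_cells_disjoint s s' n n' :
  s != s' -> cells_disjoint (slot_cell s n) (slot_cell s' n').
Proof.
rewrite /cells_disjoint /slot_cell /=; case: s s' => [e c] [e' c'].
rewrite xpair_eqE negb_and => /orP[->//|]; rewrite neq_ltn.
by case/orP => lt_c; rewrite !ler_pM2l // !lerBrDr !natr1 !ler_nat lt_c !orbT.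
Qed.

Lemma empty_slots_prob Z : uniq Z ->
  measurable (empty_slots Z) /\ P (empty_slots Z) = (z ^+ size Z)%:E.
Proof.
move=> uZ; have [] := @PU [seq slot_cell s 0 | s <- Z].
- by apply/allP => _ /mapP[s _ ->]; rewrite ler_pM2l // gerBl.
- rewrite pairwise_map; move: uZ; rewrite uniq_pairwise; apply: sub_pairwise => s s'.
  exact: slot_cells_disjoint.
move=> mE ->; split => //; congr (_%:E); rewrite big_map (eq_bigr (fun=> z)).
  by elim: {uZ mE} Z => [|s Z IH]; rewrite ?big_nil ?big_cons ?IH ?exprS.
move=> s _; rewrite /Defs.poisson_pmf expr0 mulr1 fact0 divr1 /z /=.
by congr (expR (- _)); ring.
Qed.

Lemma empty_slots_cons s Z :
  empty_slots (s :: Z) = empty_slots [:: s] `&` empty_slots Z.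
Proof.
apply/seteqP; split => w /=.
  by move=> Ew; split => c c_in; apply: Ew; move: c_in; rewrite !inE => ->; rewrite ?orbT.
by move=> [Es EZ] c; rewrite inE => /orP[c_s|]; [apply: Es; rewrite inE|apply: EZ].
Qed.

Lemma measurable_occupied s : measurable (occupied s).
Proof. by apply: measurableC; have [] := @empty_slots_prob [:: s]. Qed.

Lemma measurable_all_occupied L : measurable (all_occupied L).
Proof. by apply: bigsetI_measurable => s _; apply: measurable_occupied. Qed.

Lemma prob_occupied_empty L Z : uniq (L ++ Z) ->
  P (all_occupied L `&` empty_slots Z) = (q ^+ size L * z ^+ size Z)%:E.
Proof.
elim: L Z => [|s L IH] Z uLZ.
  by rewrite /all_occupied big_nil setTI mul1r (empty_slots_prob uLZ).2.
have uLsZ : uniq (L ++ s :: Z) by rewrite -cat1s uniq_catCA.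
have uLZ' : uniq (L ++ Z) by case/andP: uLZ.
have mLZ : measurable (all_occupied L `&` empty_slots Z).
  apply: measurableI; first exact: measurable_all_occupied.
  by apply: (empty_slots_prob _).1; move: uLZ'; rewrite cat_uniq => /and3P[].
have -> : all_occupied (s :: L) `&` empty_slots Z
    = (all_occupied L `&` empty_slots Z) `\` empty_slots [:: s].
  by rewrite /all_occupied big_cons /occupied; apply/seteqP; split => w /=; tauto.
have mS : measurable (empty_slots [:: s]) by have [] := @empty_slots_prob [:: s].
rewrite measureD //; last by rewrite (le_lt_trans (probability_le1 _ _)) ?ltry.
have -> : all_occupied L `&` empty_slots Z `&` empty_slots [:: s]
    = all_occupied L `&` empty_slots (s :: Z).
  by rewrite (empty_slots_cons s Z); apply/seteqP; split => w /=; tauto.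
rewrite [X in (X - _)%E](IH Z) // [X in (_ - X)%E](IH (s :: Z)) // -EFinB.
by rewrite /q /= !exprS; congr (_%:E); ring.
Qed.

Lemma prob_all_occupied L : uniq L -> P (all_occupied L) = (q ^+ size L)%:E.
Proof.
move=> uL; rewrite -[all_occupied L]setIT.
have -> : [set: Omega] = empty_slots [::] by apply/seteqP; split => w // _ c.
by rewrite prob_occupied_empty ?cats0 // expr0 mulr1.
Qed.

Definition window (u : R) : nat := `|Num.ceil (u / h)|%N.

Lemma window_ceil u : 0 <= u -> (window u)%:R = (Num.ceil (u / h))%:~R :> R.
Proof.
move=> u_ge0; rewrite natr_absz ger0_norm // ceil_ge0.
by apply: lt_le_trans (divr_ge0 u_ge0 (ltW h_gt0)); rewrite ltrN10.
Qed.

Lemma window_itv u : 0 <= u -> h * ((window u)%:R - 1) < u <= h * (window u)%:R.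
Proof.
move=> u_ge0; rewrite window_ceil // -ltr_pdivlMl // -ler_pdivrMl // !(mulrC h^-1).
by have := ceil_itv (u / h); rewrite rmorphB.
Qed.

Lemma window_le u u' : 0 <= u -> u <= u' -> (window u <= window u')%N.
Proof.
move=> u_ge0 uu'; rewrite -(ler_nat R) !window_ceil ?(le_trans u_ge0) // ler_int.
by apply: le_ceil; rewrite ler_pM2r ?invr_gt0.
Qed.

Lemma window_le_nat u n : 0 <= u -> u <= h * n%:R -> (window u <= n)%N.
Proof.
move=> u_ge0 u_le; rewrite -(ler_nat R) window_ceil // -[n%:R]/(n%:~R) ler_int.
by rewrite ceil_le_int ler_pdivrMr // mulrC.
Qed.

Lemma occupied_arrow w x b u : 0 <= u -> U w x b u -> occupied ((x, b), window u) w.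
Proof.
move=> u_ge0 Au Ew; have := Ew (slot_cell ((x, b), window u) 0) (mem_head _ _).
move=> [s [_ [/size0nil s0 s_in]]]; have /s_in : u \in s -> False by rewrite s0.
by apply; split => //; apply: window_itv.
Qed.

Definition step (b : bool) : int := if b then 1 else -1.

Fixpoint jump_chain (N m : nat) (x : int) (j : nat) : set Omega :=
  if m is m'.+1 then
    \big[setU/set0]_(j <= c < N) \big[setU/set0]_(b <- [:: true; false])
      (occupied ((x, b), c) `&` jump_chain N m' (x + step b) c.+1)
  else setT.

Lemma measurable_jump_chain N m x j : measurable (jump_chain N m x j).
Proof.
elim: m x j => [|m IH] x j /=; first exact: measurableT.
do 2 apply: bigsetU_measurable => ? _.
exact: measurableI (measurable_occupied _) (IH _ _).
Qed.

Lemma all_occupied_jump_chainS N m L x j :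
  all_occupied L `&` jump_chain N m.+1 x j =
  \big[setU/set0]_(j <= c < N) \big[setU/set0]_(b <- [:: true; false])
    (all_occupied (((x, b), c) :: L) `&` jump_chain N m (x + step b) c.+1).
Proof.
rewrite /= big_distrr; apply: eq_bigr => c _; rewrite big_distrr.
apply: eq_bigr => b _; rewrite /all_occupied big_cons.
by apply/seteqP; split => w /=; tauto.
Qed.

(* (1 + a)^(N - j) / a^m dominates the number of increasing m-tuples of
   windows in [j, N), which lets the induction on m close. *)
Lemma prob_jump_chain_le (a : R) N m L x j : 0 < a -> uniq L ->
  all (fun s : slot => s.2 < j)%N L ->
  (P (all_occupied L `&` jump_chain N m x j) <=
     (q ^+ size L * (2 * q / a) ^+ m * (1 + a) ^+ (N - j))%:E)%E.
Proof.
move=> a_gt0; elim: m L x j => [|m IH] L x j uL Lj.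
  rewrite setIT prob_all_occupied // lee_fin expr0 mulr1 ler_peMr ?exprn_ge0 ?q_ge0 //.
  by rewrite exprn_ege1 // lerDl ltW.
set F := fun c b => all_occupied (((x, b), c) :: L) `&` jump_chain N m (x + step b) c.+1.
have mF c b : measurable (F c b).
  exact: measurableI (measurable_all_occupied _) (measurable_jump_chain _ _ _ _).
have PF c b : (j <= c < N)%N ->
    (P (F c b) <= (q ^+ (size L).+1 * (2 * q / a) ^+ m * (1 + a) ^+ (N - c.+1))%:E)%E.
  move=> /andP[jc _]; apply: IH => /=.
    rewrite uL andbT; apply/negP => /(allP Lj) /=; lia.
  by rewrite ltnSn; apply/allP => s /(allP Lj); lia.
set K := q ^+ size L * (2 * q / a) ^+ m.+1.
have PUF c : c \in index_iota j N ->
    (P (\big[setU/set0]_(b <- [:: true; false]) F c b) <=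
     (K * (a * (1 + a) ^+ (N - c.+1)))%:E)%E.
  rewrite mem_index_iota => jcN; apply: le_trans (measure_bigsetU_le _ (mF c)) _.
  rewrite !big_cons big_nil adde0; apply: le_trans (leeD (PF c true jcN) (PF c false jcN)) _.
  rewrite -EFinD lee_fin le_eqVlt /K !exprS; apply/orP; left; apply/eqP.
  by field; rewrite gt_eqF.
rewrite all_occupied_jump_chainS.
apply: le_trans (measure_bigsetU_le _ (fun c => bigsetU_measurable _ (fun b _ => mF c b))) _.
apply: (@le_trans _ _ (\sum_(c <- index_iota j N) (K * (a * (1 + a) ^+ (N - c.+1)))%:E)%E).
  by rewrite big_seq [leRHS]big_seq; apply: lee_sum.
rewrite sumEFin -mulr_sumr geometric_sum_nat lee_fin ler_wpM2l ?gerDl ?lerN10 //.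
by rewrite mulr_ge0 ?exprn_ge0 ?divr_ge0 ?mulr_ge0 ?q_ge0 ?ltW.
Qed.

Lemma prob_jump_chain_exp N m x :
  (P (jump_chain N m x 0) <= (expR (2 * expR 1 * lam * h * N%:R - m%:R))%:E)%E.
Proof.
set a := 2 * expR 1 * lam * h.
have a_gt0 : 0 < a by rewrite !mulr_gt0 ?expR_gt0.
have := @prob_jump_chain_le a N m [::] x 0 a_gt0 isT isT.
rewrite /all_occupied big_nil setTI subn0 expr0 mul1r => /le_trans; apply.
have ratio_ge0 : 0 <= 2 * q / a by rewrite divr_ge0 ?mulr_ge0 ?q_ge0 ?ltW.
have ratio_le : 2 * q / a <= expR (-1).
  rewrite ler_pdivrMr // expRN.
  have -> : (expR 1)^-1 * a = 2 * (lam * h) by rewrite /a; field; rewrite gt_eqF ?expR_gt0.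
  by rewrite ler_pM2l // q_le.
have ratio_pow : (2 * q / a) ^+ m <= expR (-1) ^+ m.
  by apply: lerXn2r; rewrite ?nnegrE ?expR_ge0.
have one_plus_a_ge0 : 0 <= 1 + a by rewrite addr_ge0 // ltW.
have growth_pow : (1 + a) ^+ N <= expR a ^+ N.
  by apply: lerXn2r; rewrite ?nnegrE ?expR_ge0 ?expR_ge1Dx.
apply: le_trans (ler_pM (exprn_ge0 _ ratio_ge0) (exprn_ge0 _ one_plus_a_ge0)
  ratio_pow growth_pow) _.
by rewrite -!expRM_natl -expRD ler_expR; lra.
Qed.

Definition double_at (y : int) (c : nat) (b b' : bool) : set Omega :=
  occupied ((y, b), c) `&` occupied ((y + 1, b'), c).

Definition double_occupied (k N : nat) : set Omega :=
  \big[setU/set0]_(v : 'I_(2 * k) * 'I_N * bool * bool)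
    double_at (v.1.1.1%:Z - k%:Z) v.1.1.2 v.1.2 v.2.

Lemma double_atE y c b b' :
  double_at y c b b' = all_occupied [:: ((y, b), c); ((y + 1, b'), c)].
Proof. by rewrite /all_occupied !big_cons big_nil setIT. Qed.

Lemma measurable_double_at y c b b' : measurable (double_at y c b b').
Proof. by rewrite double_atE; apply: measurable_all_occupied. Qed.

Lemma measurable_double_occupied k N : measurable (double_occupied k N).
Proof. by apply: bigsetU_measurable => v _; apply: measurable_double_at. Qed.

Lemma prob_double_occupied k N :
  (P (double_occupied k N) <= ((8 * k * N)%:R * q ^+ 2)%:E)%E.
Proof.
apply: le_trans (@measure_bigsetU_card_le _ _ (q ^+ 2) _ _) _.
- by move=> v; apply: measurable_double_at.
- move=> v; rewrite double_atE prob_all_occupied //= andbT inE !xpair_eqE.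
  by apply/negP => /andP[/andP[/eqP + _] _]; lia.
- by rewrite !card_prod !card_ord card_bool lee_fin ler_wpM2r ?sqr_ge0 // ler_nat; lia.
Qed.

Lemma sub_double_occupied k N w y c b b' : - (k%:Z) <= y < k%:Z -> (c < N)%N ->
  double_at y c b b' w -> double_occupied k N w.
Proof.
move=> /andP[ky yk] cN yw; rewrite /double_occupied -bigcup_seq.
have yk_lt : (absz (y + k%:Z)%R < 2 * k)%N by lia.
exists (Ordinal yk_lt, Ordinal cN, b, b'); first by rewrite /= mem_index_enum.
by rewrite /= (_ : (absz (y + k%:Z))%:Z - k%:Z = y) //; lia.
Qed.

(* Two consecutive jumps in one window would occupy two adjacent edges in it. *)
Lemma window_after_jump w k N x b b' u u' :
  ~ double_occupied k N w -> (`|x| < k)%N -> (window u < N)%N -> 0 <= u -> u <= u' ->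
  U w x b u -> U w (x + step b) b' u' -> (window u < window u')%N.
Proof.
move=> no_double xk uN u_ge0 uu' Au Au'; rewrite ltn_neqAle window_le // andbT.
apply/eqP => same_window; apply: no_double.
have occ := occupied_arrow u_ge0 Au.
have occ' := occupied_arrow (le_trans u_ge0 uu') Au'; rewrite -same_window in occ'.
case: b {Au Au'} occ occ' => occ occ'.
  by apply: (@sub_double_occupied k N w x (window u) true b' _ uN); [lia | split].
apply: (@sub_double_occupied k N w (x - 1) (window u) b' false _ uN); first lia.
by rewrite /double_at subrK; split.
Qed.

Lemma jumps_in_after (A : arrows R) a t p s : lam_path A p s -> t < p.2 ->
  jumps_in a t p s = 0%N.
Proof.
elim: s p => [//|p' s IH] p /= [step_p path_p'] tp.
have tp' : t < p'.2 by case: step_p => [[_ ?]|[-> _]]; [apply: lt_le_trans tp _|].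
by rewrite IH // [p.2 <= t]leNgt tp !andbF.
Qed.

Lemma jump_chain_of_path w k n t : t <= h * n%:R -> ~ double_occupied k n.+1 w ->
  forall s p j m, lam_path (U w) p s -> 0 <= p.2 ->
  (forall b u, p.2 <= u <= t -> U w p.1 b u -> (j <= window u)%N) ->
  (`|p.1| + m <= k)%N -> (m <= jumps_in 0 t p s)%N -> jump_chain n.+1 m p.1 j w.
Proof.
move=> tn no_double; elim=> [|p' s IH] p j [|m] // path_p p_ge0 later_windows.
have [tp|pt] := ltP t p.2; first by rewrite (jumps_in_after _ path_p tp).
case: path_p => step_p path_p'.
case: step_p => [[same_site p'_later]|[same_time jump]].
  rewrite [jumps_in _ _ _ _]/= same_site eqxx add0n => box jumps; rewrite -same_site.
  apply: (IH _ j m.+1) => //; first exact: le_trans p_ge0 p'_later.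
    move=> b u /andP[p'u ut]; rewrite same_site; apply: later_windows.
    by rewrite ut andbT (le_trans p'_later p'u).
  by rewrite same_site.
have [b [p'_site Ap]] : exists b, p'.1 = p.1 + step b /\ U w p.1 b p.2.
  by case: jump => [[? ?]|[? ?]]; [exists true|exists false].
have moved : p'.1 != p.1 by rewrite p'_site; case: (b) => /=; apply/negP => /eqP; lia.
rewrite [jumps_in _ _ _ _]/= moved p_ge0 pt add1n ltnS => box jumps /=.
have pn : (window p.2 < n.+1)%N by rewrite ltnS window_le_nat // (le_trans pt tn).
rewrite -bigcup_seq; exists (window p.2).
  by rewrite /= mem_index_iota pn andbT (later_windows b) // lexx.
rewrite -bigcup_seq; exists b; first by case: (b).
split; first exact: occupied_arrow.
rewrite -p'_site; apply: IH => //; first by rewrite same_time.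
  move=> b' u /andP[p'u ut]; rewrite p'_site => Au'.
  apply: (window_after_jump no_double _ pn p_ge0 _ Ap Au'); first lia.
  by rewrite -same_time.
by rewrite p'_site; case: (b) {Ap p'_site moved} => /=; lia.
Qed.

End Discretization.

Lemma good_event_lower_bound (beta t : R) (k n : nat) :
  0 < t -> (0 < n)%N -> Num.ceil (beta * t) = k%:Z ->
  exists G : set Omega, measurable G /\
    G `<=` [set w | good (U w) beta t 0 0] /\
    ((1 - (expR (2 * expR 1 * lam * (t / n%:R) * n.+1%:R - k%:R)
           + (8 * k * n.+1)%:R * (lam * t / n%:R) ^+ 2))%:E <= P G)%E.
Proof.
move=> t_gt0 n_gt0 ceil_k; set h := t / n%:R.
have h_gt0 : 0 < h by rewrite divr_gt0 // ltr0n.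
have tn : t <= h * n%:R by rewrite divfK // gt_eqF // ltr0n.
set B := jump_chain h n.+1 k 0 0 `|` double_occupied h k n.+1.
have mB : measurable B.
  exact: measurableU (measurable_jump_chain h_gt0 _ _ _ _)
                     (measurable_double_occupied h_gt0 _ _).
exists (~` B); split; first exact: measurableC.
split.
  move=> w /= notB path path_ok; rewrite add0r ceil_k ltz_nat ltnNge.
  have no_double : ~ double_occupied h k n.+1 w by move=> ?; apply: notB; right.
  apply/negP => many_jumps; apply: notB; left.
  exact: (jump_chain_of_path (k := k) h_gt0 tn no_double path_ok).
rewrite probability_setC // EFinB; apply: leeB => //.
apply: le_trans (measureU2 _ _ _) _.
- exact: measurable_jump_chain.
- exact: measurable_double_occupied.
rewrite EFinD; apply: leeD; first exact: prob_jump_chain_exp.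
apply: le_trans (prob_double_occupied h_gt0 _ _) _; rewrite lee_fin -mulrA ler_wpM2l //.
by apply: lerXn2r; rewrite ?nnegrE ?q_ge0 ?q_le // mulr_ge0 // ltW.
Qed.

End PoissonArrows.

Lemma chain_exponent_le (R : realType) (lam rho t : R) (k n : nat) :
  0 < lam -> 1 <= t -> (0 < n)%N -> (4 * expR 1 * lam + `|rho| + 2) * t <= k%:R ->
  2 * expR 1 * lam * (t / n%:R) * n.+1%:R - k%:R <= - (rho * t) - 2.
Proof.
move=> lam_gt0 t_ge1 n_gt0 tk.
have n_ge1 : 1 <= n%:R :> R by rewrite ler1n.
have per_window : t / n%:R * n.+1%:R <= 2 * t.
  by rewrite -natr1 mulrAC ler_pdivrMr ?ltr0n //; nra.
have el_ge0 : 0 <= 2 * expR 1 * lam by rewrite !mulr_ge0 ?expR_ge0 ?ltW.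
have rho_t : rho * t <= `|rho| * t by rewrite ler_wpM2r ?ler_norm //; lra.
have := ler_wpM2l el_ge0 per_window; rewrite !mulrA; lra.
Qed.

Lemma double_term_le (R : realType) (x E : R) (k n : nat) :
  0 < E -> 32 * k%:R * x ^+ 2 / E < n%:R ->
  (8 * k * n.+1)%:R * (x / n%:R) ^+ 2 <= E / 2.
Proof.
move=> E_gt0 n_large.
have kx_ge0 : 0 <= k%:R * x ^+ 2 :> R by rewrite mulr_ge0 ?sqr_ge0.
have n_gt0 : 0 < n%:R :> R.
  by apply: le_lt_trans n_large; apply: divr_ge0; [rewrite -mulrA mulr_ge0 | exact: ltW].
have n_ge1 : 1 <= n%:R :> R by rewrite ler1n -(ltr0n R).
rewrite ltr_pdivrMr // in n_large.
have -> : (8 * k * n.+1)%:R * (x / n%:R) ^+ 2 =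
    8 * (k%:R * x ^+ 2) * (n%:R + 1) / n%:R ^+ 2.
  by rewrite -natr1 !natrM; field; rewrite gt_eqF.
rewrite ler_pdivrMr ?exprn_gt0 //; nra.
Qed.

Lemma expRN2_lt_half (R : realType) : expR (-2) < 1 / 2 :> R.
Proof.
rewrite expRN div1r ltf_pV2 ?posrE ?expR_gt0 //.
by apply: lt_le_trans (expR_ge1Dx 2); lra.
Qed.

Theorem lemma7 (R : realType) (d : measure_display) (Omega : measurableType d)
  (P : probability Omega R) (lam : R) (U : Omega -> arrows R) :
  0 < lam -> poisson_arrows P lam U ->
  forall rho : R, exists beta : R, exists T : R, forall t : R, T <= t ->
    exists G : set Omega, measurable G /\
      G `<=` [set w | good (U w) beta t 0 0] /\
      ((1 - expR (- (rho * t)))%:E < P G)%E.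
Proof.
move=> lam_gt0 PU rho; pose beta := 4 * expR 1 * lam + `|rho| + 2.
exists beta, 1 => t t_ge1; have t_gt0 : 0 < t by lra.
have bt_gt0 : 0 < beta * t.
  apply: mulr_gt0 => //; have : 0 < 4 * expR 1 * lam by rewrite !mulr_gt0 ?expR_gt0.
  by have := normr_ge0 rho; rewrite /beta; lra.
set k := `|Num.ceil (beta * t)|%N.
have ceil_k : Num.ceil (beta * t) = k%:Z by rewrite gez0_abs // ceil_ge0; lra.
have bt_le_k : beta * t <= k%:R by rewrite -[k%:R]/(k%:Z%:~R) -ceil_k ceil_ge.
set E := expR (- (rho * t)); have E_gt0 : 0 < E := expR_gt0 _.
pose n := (Num.Def.archi_bound (32 * k%:R * (lam * t) ^+ 2 / E)).+1.
have n_large : 32 * k%:R * (lam * t) ^+ 2 / E < n%:R.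
  apply: lt_le_trans (archi_boundP _) _; last by rewrite ler_nat.
  by apply: divr_ge0; [rewrite mulr_ge0 ?sqr_ge0 // mulr_ge0 | exact: (ltW E_gt0)].
have [G [mG [G_good PG]]] := good_event_lower_bound lam_gt0 PU t_gt0 (isT : 0 < n)%N ceil_k.
exists G; split=> //; split=> //; apply: lt_le_trans PG; rewrite lte_fin ltrD2l ltrN2.
have chain_small := chain_exponent_le (rho := rho) lam_gt0 t_ge1 (isT : 0 < n)%N bt_le_k.
have double_small := double_term_le E_gt0 n_large.
have : E * expR (-2) < E * (1 / 2) by rewrite ltr_pM2l // expRN2_lt_half.
by rewrite -ler_expR [expR (_ - 2)]expRD -/E in chain_small; lra.
Qed.
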